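(* Let $\mathbb{T}\colon\mathbb{R}^d\to\mathbb{R}^d$ be nonexpansive and let $y_\star\in\mathrm{Fix}\,\mathbb{T}$. Let $N\ge 1$ be an integer, let $y_0\in\mathbb{R}^d$, set $\mathbb{T}y_{-1}:=y_0$, and define \[ y_{k+1} = y_k + \frac{N-k-1}{N-k}\left(\mathbb{T}y_k - \mathbb{T}y_{k-1}\right), \qquad k=0,1,\dots,N-2 \] (the Dual Optimal Halpern Method, Dual-OHM). Then \[ \|y_{N-1} - \mathbb{T}y_{N-1}\|^2 \le \frac{4\|y_0 - y_\star\|^2}{N^2}. \]
   Context: $\mathbb{T}$ is nonexpansive if $\|\mathbb{T}x-\mathbb{T}y\|\le\|x-y\|$ for all $x,y$. $\mathrm{Fix}\,\mathbb{T}=\{y:\ y=\mathbb{T}y\}$. *)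

From HB Require Import structures.
From mathcomp Require Import all_boot all_order all_algebra.
From mathcomp Require Import reals.
Set Implicit Arguments. Unset Strict Implicit. Unset Printing Implicit Defensive.
Import Order.TTheory GRing.Theory Num.Theory.
Local Open Scope ring_scope.

Definition sqnorm (R : realType) (d : nat) (x : 'rV[R]_d) : R :=
  \sum_(i < d) (x ord0 i) ^+ 2.

Definition enorm (R : realType) (d : nat) (x : 'rV[R]_d) : R :=
  Num.sqrt (sqnorm x).

Definition nonexpansive (R : realType) (d : nat) (T : 'rV[R]_d -> 'rV[R]_d) :=
  forall x y, enorm (T x - T y) <= enorm (x - y).

Definition is_fixed (R : realType) (d : nat) (T : 'rV[R]_d -> 'rV[R]_d)
  (y : 'rV[R]_d) := T y = y.

(* Dual-OHM: state (y_k, T y_{k-1}), with the convention T y_{-1} := y_0.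
   y_{k+1} = y_k + (N-k-1)/(N-k) (T y_k - T y_{k-1}). *)
Fixpoint dual_ohm_state (R : realType) (d : nat) (T : 'rV[R]_d -> 'rV[R]_d)
  (N : nat) (y0 : 'rV[R]_d) (k : nat) : 'rV[R]_d * 'rV[R]_d :=
  match k with
  | 0 => (y0, y0)
  | k'.+1 =>
      let (yk, Tprev) := dual_ohm_state T N y0 k' in
      (yk + (((N - k' - 1)%:R / (N - k')%:R) : R) *: (T yk - Tprev), T yk)
  end.

Definition dual_ohm (R : realType) (d : nat) (T : 'rV[R]_d -> 'rV[R]_d)
  (N : nat) (y0 : 'rV[R]_d) (k : nat) : 'rV[R]_d :=
  (dual_ohm_state T N y0 k).1.

From HB Require Import structures.
From mathcomp Require Import all_boot all_order all_algebra.
From mathcomp Require Import reals.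
From mathcomp Require Import ring.
Set Implicit Arguments. Unset Strict Implicit. Unset Printing Implicit Defensive.
Import Order.TTheory GRing.Theory Num.Theory.
Local Open Scope ring_scope.

(* Put m_k = N - k and lambda_j = 1 / ((N - j) (N - j - 1)), so that
   sum_{j<k} lambda_j = 1/m_k - 1/N.  The state (y_k, T y_{k-1}) of Dual-OHM is
   an affine function of the two weighted sums
     P_k = y_0 / N + sum_{j<k} lambda_j T y_j,   G_k = sum_{j<k} lambda_j (y_j - T y_j),
   and the weighted energy sum_{j<k} lambda_j (|y_j|^2 - |T y_j|^2) equals
   m_k G_k (2 P_k - (m_k - 1) G_k).  At the last iterate u = y_{N-1}, where m = 1,
   this gives the exact identity
     sum_{j<N-1} lambda_j (|y_j - u|^2 - |T y_j - T u|^2) + (|u - y*|^2 - |T u - y*|^2) / N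
       = (2/N) <u - T u, y_0 - y*> - |u - T u|^2,
   whose left side is nonnegative because T is nonexpansive and T y* = y*.
   Completing the square in |u - T u|^2 <= (2/N) <u - T u, y_0 - y*> gives the bound.
   All these identities hold coordinatewise, for arbitrary values t_j in place of
   the coordinates of T y_j, so they are proved for scalar sequences. *)

Lemma natr_subn_neq0 (R : numDomainType) (N k : nat) : (k < N)%N -> (N - k)%:R != 0 :> R.
Proof. by move=> lt_kN; rewrite pnatr_eq0 -lt0n subn_gt0. Qed.

Lemma natr_subnS (R : numDomainType) (N k : nat) : (k < N)%N ->
  (N - k.+1)%:R = (N - k)%:R - 1 :> R.
Proof.
by move=> lt_kN; rewrite (natrB _ lt_kN) (natrB _ (ltnW lt_kN)) -addn1 natrD opprD addrA.
Qed.

Section ScalarDualOHM.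
Variables (R : numFieldType) (N : nat) (y t : nat -> R).

Definition ohm_weight (j : nat) : R := ((N - j)%:R * (N - j - 1)%:R)^-1.

Definition weighted_sum (f : nat -> R) (k : nat) : R := \sum_(j < k) ohm_weight j * f j.

Definition tprev (k : nat) : R := if k is k'.+1 then t k' else y 0.

Hypothesis N_gt0 : (0 < N)%N.
Hypothesis y_step : forall k,
  y k.+1 = y k + ((N - k - 1)%:R / (N - k)%:R) * (t k - tprev k).

Local Notation m k := ((N - k)%:R : R).
Local Notation P k := (y 0 / N%:R + weighted_sum t k).
Local Notation G k := (weighted_sum (fun j => y j - t j) k).

Let N_neq0 : N%:R != 0 :> R. Proof. by rewrite pnatr_eq0 -lt0n. Qed.

Let m_step_neq0 k : (k.+1 < N)%N -> m k != 0 /\ m k - 1 != 0.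
Proof.
by move=> lt_k1N; rewrite -natr_subnS 1?ltnW // !natr_subn_neq0 // ltnW.
Qed.

Lemma weighted_sum_succ f k :
  weighted_sum f k.+1 = weighted_sum f k + (m k * m k.+1)^-1 * f k.
Proof. by rewrite /weighted_sum big_ord_recr /= /ohm_weight -subnDA addn1. Qed.

Lemma weighted_sum1 k : (k < N)%N -> weighted_sum (fun=> 1) k = (m k)^-1 - N%:R^-1.
Proof.
elim: k => [_|k IH lt_k1N]; first by rewrite /weighted_sum big_ord0 subn0 subrr.
have [mk_neq0 mk1_neq0] := m_step_neq0 lt_k1N.
rewrite weighted_sum_succ IH 1?ltnW // natr_subnS 1?ltnW //.
by field; rewrite N_neq0 mk_neq0 mk1_neq0.
Qed.

Lemma weighted_sum_expand p q k :
  weighted_sum (fun j => (y j - p) ^+ 2 - (t j - q) ^+ 2) k =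
  weighted_sum (fun j => y j ^+ 2 - t j ^+ 2) k - 2 * p * weighted_sum (fun j => y j - t j) k
  - 2 * (p - q) * weighted_sum t k + weighted_sum (fun=> 1) k * (p ^+ 2 - q ^+ 2).
Proof.
rewrite /weighted_sum !mulr_sumr mulr_suml -!sumrB -big_split /=.
by apply: eq_bigr => j _; ring.
Qed.

Lemma ohm_state_weighted_sums k : (k < N)%N ->
  y k = m k * (P k - (m k - 1) * G k) /\ tprev k = m k * (P k - m k * G k).
Proof.
elim: k => [_|k IH lt_k1N].
  by rewrite /weighted_sum !big_ord0 subn0 /=; split; field.
have [yk tk] := IH (ltnW lt_k1N).
have [mk_neq0 mk1_neq0] := m_step_neq0 lt_k1N.
rewrite /= !weighted_sum_succ y_step -subnDA addn1 natr_subnS 1?ltnW // yk tk.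
by split; field; rewrite N_neq0 mk_neq0 mk1_neq0.
Qed.

Lemma weighted_sum_energy k : (k < N)%N ->
  weighted_sum (fun j => y j ^+ 2 - t j ^+ 2) k = m k * G k * (2 * P k - (m k - 1) * G k).
Proof.
elim: k => [_|k IH lt_k1N]; first by rewrite /weighted_sum !big_ord0 mulr0 mul0r.
have [mk_neq0 mk1_neq0] := m_step_neq0 lt_k1N.
rewrite !weighted_sum_succ IH 1?ltnW // natr_subnS 1?ltnW //.
rewrite (ohm_state_weighted_sums (ltnW lt_k1N)).1.
by field; rewrite N_neq0 mk_neq0 mk1_neq0.
Qed.

Lemma ohm_last_identity s :
  weighted_sum (fun j => (y j - y N.-1) ^+ 2 - (t j - t N.-1) ^+ 2) N.-1
  + ((y N.-1 - s) ^+ 2 - (t N.-1 - s) ^+ 2) / N%:R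
  = 2 / N%:R * (y N.-1 - t N.-1) * (y 0 - s) - (y N.-1 - t N.-1) ^+ 2.
Proof.
have lt_lastN : (N.-1 < N)%N by rewrite prednK.
have m_last : m N.-1 = 1 by rewrite -subn1 subKn.
rewrite weighted_sum_expand weighted_sum_energy // weighted_sum1 //.
by rewrite (ohm_state_weighted_sums lt_lastN).1 m_last; field.
Qed.

End ScalarDualOHM.

Arguments ohm_weight {R}.

Section Euclidean.
Variables (R : realType) (d : nat).
Implicit Types (x z g w : 'rV[R]_d).

Definition dotv x z : R := \sum_(i < d) x ord0 i * z ord0 i.

Lemma sqnorm_ge0 x : 0 <= sqnorm x.
Proof. by apply: sumr_ge0 => i _; apply: sqr_ge0. Qed.

Lemma enorm_sqr x : enorm x ^+ 2 = sqnorm x.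
Proof. by rewrite sqr_sqrtr // sqnorm_ge0. Qed.

Lemma nonexpansive_sqnorm (T : 'rV[R]_d -> 'rV[R]_d) : nonexpansive T ->
  forall x z, sqnorm (T x - T z) <= sqnorm (x - z).
Proof. by move=> T_ne x z; have := T_ne x z; rewrite /enorm ler_sqrt // sqnorm_ge0. Qed.

Lemma sqnorm_le_of_le_dotv (c : R) g w : c != 0 ->
  sqnorm g <= 2 / c * dotv g w -> sqnorm g <= 4 * sqnorm w / c ^+ 2.
Proof.
move=> c_neq0; rewrite -subr_ge0 => le_g; rewrite -subr_ge0.
have -> : 4 * sqnorm w / c ^+ 2 - sqnorm g =
          sqnorm (g - (2 / c) *: w) + 2 * (2 / c * dotv g w - sqnorm g).
  rewrite /sqnorm /dotv !mulr_sumr mulr_suml -!sumrB mulr_sumr -big_split /=.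
  by apply: eq_bigr => i _; rewrite !mxE; field.
by rewrite addr_ge0 ?sqnorm_ge0 // mulr_ge0.
Qed.

End Euclidean.

Section DualOHM.
Variables (R : realType) (d : nat) (T : 'rV[R]_d -> 'rV[R]_d) (N : nat) (y0 : 'rV[R]_d).

Local Notation yv k := (dual_ohm T N y0 k).

Lemma dual_ohm_state_snd k :
  (dual_ohm_state T N y0 k).2 = if k is k'.+1 then T (yv k') else y0.
Proof. by case: k => [|k] //=; rewrite /dual_ohm; case: dual_ohm_state. Qed.

Lemma dual_ohm_coord_step i k :
  yv k.+1 ord0 i = yv k ord0 i + ((N - k - 1)%:R / (N - k)%:R) *
    (T (yv k) ord0 i - tprev (fun j => yv j ord0 i) (fun j => T (yv j) ord0 i) k).
Proof.
have := dual_ohm_state_snd k; rewrite /dual_ohm /=.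
by case: dual_ohm_state => u v /= ->; rewrite !mxE; case: k.
Qed.

Lemma dual_ohm_last_identity s : (0 < N)%N ->
  \sum_(j < N.-1) ohm_weight N j * (sqnorm (yv j - yv N.-1) - sqnorm (T (yv j) - T (yv N.-1)))
  + (sqnorm (yv N.-1 - s) - sqnorm (T (yv N.-1) - s)) / N%:R
  = 2 / N%:R * dotv (yv N.-1 - T (yv N.-1)) (y0 - s) - sqnorm (yv N.-1 - T (yv N.-1)).
Proof.
move=> N_gt0; rewrite /sqnorm /dotv.
under eq_bigr => j _ do rewrite -sumrB mulr_sumr.
rewrite exchange_big /= -sumrB mulr_suml -big_split mulr_sumr -sumrB /=.
apply: eq_bigr => i _.
under eq_bigr => j _ do rewrite !mxE.
rewrite !mxE mulrA.
exact: (ohm_last_identity N_gt0 (dual_ohm_coord_step i)).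
Qed.

Lemma dual_ohm_residual_le_dotv s : nonexpansive T -> is_fixed T s -> (0 < N)%N ->
  sqnorm (yv N.-1 - T (yv N.-1)) <= 2 / N%:R * dotv (yv N.-1 - T (yv N.-1)) (y0 - s).
Proof.
move=> T_ne Ts N_gt0; rewrite -subr_ge0 -dual_ohm_last_identity //.
have ne := nonexpansive_sqnorm T_ne.
apply: addr_ge0.
  apply: sumr_ge0 => j _; apply: mulr_ge0; last by rewrite subr_ge0; exact: ne.
  by rewrite invr_ge0 mulr_ge0.
apply: divr_ge0 => //; rewrite subr_ge0 -{1}Ts; exact: ne.
Qed.

End DualOHM.

Theorem theorem3p3 (R : realType) (d : nat) (T : 'rV[R]_d -> 'rV[R]_d)
  (ystar y0 : 'rV[R]_d) (N : nat) :
  nonexpansive T -> is_fixed T ystar -> (1 <= N)%N ->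
  enorm (dual_ohm T N y0 N.-1 - T (dual_ohm T N y0 N.-1)) ^+ 2
    <= 4 * enorm (y0 - ystar) ^+ 2 / (N%:R ^+ 2).
Proof.
move=> T_ne Tystar N_gt0.
rewrite !enorm_sqr; apply: sqnorm_le_of_le_dotv; first by rewrite pnatr_eq0 -lt0n.
exact: dual_ohm_residual_le_dotv.
Qed.
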